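(* Let $e=(1,0)$ and $g(s)=1+|s|^2-2\frac{s_1^2}{|s|}$ for $s=(s_1,s_2)\in\mathbb{R}^2$. Then $$\left|\frac{\varepsilon^2}{2\varepsilon^2+g(e+\varepsilon k)}-\frac{1}{2+k_1^2+2k_3^2}\right|\lesssim\frac{\varepsilon|k|^3}{(1+|k|^2)^2}$$ uniformly over $k=(k_1,k_3)$ with $|k|<\delta/\varepsilon$.
   Context: $\delta\in(0,\frac15)$ is fixed and $\varepsilon>0$. $A\lesssim B$ means $A\le CB$ with a constant $C$ independent of $\varepsilon$ and $k$. *)

From Stdlib Require Export Reals Lra.
Open Scope R_scope.

Definition norm2 (a b : R) : R := sqrt (a ^ 2 + b ^ 2).

Definition g (s1 s2 : R) : R :=
  1 + (norm2 s1 s2) ^ 2 - 2 * (s1 ^ 2 / norm2 s1 s2).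

From Stdlib Require Import Reals Lra Psatz.
Open Scope R_scope.

(* Write r = |e + eps k| = 1 + eps a.  Since s1^2 = |s|^2 - s2^2, one has
   g(s) = (|s| - 1)^2 + 2 s2^2 / |s|, so the left-hand quotient equals
   1 / (2 + a^2 + 2 k3^2 / r).  Squaring r shows k1 <= a <= k1 + eps|k|^2/2
   and |a| <= |k|, hence this denominator differs from 2 + k1^2 + 2 k3^2 by
   O(eps |k|^3) while both are of size 1 + |k|^2, provided eps|k| <= 1/5. *)

Lemma norm2_ge0 (a b : R) : 0 <= norm2 a b.
Proof. apply sqrt_pos. Qed.

Lemma norm2_sq (a b : R) : norm2 a b ^ 2 = a ^ 2 + b ^ 2.
Proof. apply pow2_sqrt; nra. Qed.

Lemma norm2_scale (c a b : R) : 0 <= c -> norm2 (c * a) (c * b) = c * norm2 a b.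
Proof.
  intros Hc; unfold norm2.
  replace ((c * a) ^ 2 + (c * b) ^ 2) with (c ^ 2 * (a ^ 2 + b ^ 2)) by ring.
  rewrite sqrt_mult, sqrt_pow2; nra.
Qed.

Lemma le_of_pow2_le (x y : R) : 0 <= y -> x ^ 2 <= y ^ 2 -> x <= y.
Proof. intros Hy Hxy; apply Rsqr_incr_0_var; rewrite ?Rsqr_pow2; assumption. Qed.

Lemma norm2_bound_l (a b : R) : - norm2 a b <= a <= norm2 a b.
Proof.
  pose proof (norm2_ge0 a b); pose proof (norm2_sq a b).
  split; [cut (- a <= norm2 a b); [lra |] |]; apply le_of_pow2_le; nra.
Qed.

Lemma norm2_shift_sub1_between (x y : R) :
  - norm2 x y <= norm2 (1 + x) y - 1 <= norm2 x y.
Proof.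
  pose proof (norm2_ge0 (1 + x) y); pose proof (norm2_bound_l x y).
  pose proof (norm2_sq (1 + x) y); pose proof (norm2_sq x y).
  set (r := norm2 (1 + x) y) in *; set (m := norm2 x y) in *.
  split.
  - destruct (Rle_lt_dec 1 m); [lra |].
    assert (1 - m <= r) by (apply le_of_pow2_le; nra). lra.
  - assert (r <= 1 + m) by (apply le_of_pow2_le; nra). lra.
Qed.

Lemma norm2_shift_sub1_taylor (x y : R) :
  x <= norm2 (1 + x) y - 1 <= x + norm2 x y ^ 2 / 2.
Proof.
  pose proof (norm2_ge0 (1 + x) y); pose proof (norm2_bound_l x y).
  pose proof (norm2_sq (1 + x) y); pose proof (norm2_sq x y).
  set (r := norm2 (1 + x) y) in *; set (m := norm2 x y) in *.
  split.
  - assert (1 + x <= r) by (apply le_of_pow2_le; nra). lra.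
  - assert (r <= 1 + x + m ^ 2 / 2); [| lra].
    apply le_of_pow2_le; [nra |].
    pose proof (pow2_ge_0 (x + m ^ 2 / 2)). nra.
Qed.

Lemma norm2_shift_scaled (eps k1 k3 : R) : 0 < eps ->
  let a := (norm2 (1 + eps * k1) (eps * k3) - 1) / eps in
  - norm2 k1 k3 <= a <= norm2 k1 k3 /\ 0 <= a - k1 <= eps * norm2 k1 k3 ^ 2 / 2.
Proof.
  intros Heps a.
  pose proof (norm2_shift_sub1_between (eps * k1) (eps * k3)) as Habs.
  pose proof (norm2_shift_sub1_taylor (eps * k1) (eps * k3)) as Hbounds.
  rewrite norm2_scale in Habs, Hbounds by lra.
  assert (Ha : norm2 (1 + eps * k1) (eps * k3) - 1 = eps * a) by (unfold a; field; lra).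
  rewrite Ha in Habs, Hbounds.
  split; split; nra.
Qed.

Lemma g_polar (s1 s2 : R) : 0 < norm2 s1 s2 ->
  g s1 s2 = (norm2 s1 s2 - 1) ^ 2 + 2 * s2 ^ 2 / norm2 s1 s2.
Proof.
  intros Hr; unfold g.
  replace (s1 ^ 2) with (norm2 s1 s2 ^ 2 - s2 ^ 2) by (rewrite norm2_sq; ring).
  field; lra.
Qed.

Lemma shifted_ratio (eps k3 r : R) : 0 < eps -> 0 < r ->
  eps ^ 2 / (2 * eps ^ 2 + ((r - 1) ^ 2 + 2 * (eps * k3) ^ 2 / r))
  = 1 / (2 + ((r - 1) / eps) ^ 2 + 2 * k3 ^ 2 / r).
Proof.
  intros Heps Hr.
  replace (2 * eps ^ 2 + ((r - 1) ^ 2 + 2 * (eps * k3) ^ 2 / r))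
    with (eps ^ 2 * (2 + ((r - 1) / eps) ^ 2 + 2 * k3 ^ 2 / r)) by (field; lra).
  assert (eps ^ 2 <> 0) by (apply pow_nonzero; lra).
  unfold Rdiv; rewrite Rinv_mult, <- Rmult_assoc, Rinv_r by assumption.
  reflexivity.
Qed.

Lemma Rabs_inv_sub_le (X T A B : R) : 0 < A -> A <= X -> 0 < B -> B <= T ->
  Rabs (1 / X - 1 / T) <= Rabs (X - T) / (A * B).
Proof.
  intros HA HAX HB HBT.
  replace (1 / X - 1 / T) with ((T - X) / (X * T)) by (field; lra).
  unfold Rdiv; rewrite Rabs_mult, Rabs_inv, Rabs_minus_sym, (Rabs_pos_eq (X * T)) by nra.
  apply Rmult_le_compat_l; [apply Rabs_pos |].
  apply Rinv_le_contravar; nra.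
Qed.

Section Comparison.

Variables eps k1 k3 n a : R.
Hypotheses (Heps : 0 <= eps) (Hn2 : n ^ 2 = k1 ^ 2 + k3 ^ 2)
  (Hsmall : eps * n <= 1 / 5) (Ha : - n <= a <= n)
  (Hak1 : 0 <= a - k1 <= eps * n ^ 2 / 2).

Let r := 1 + eps * a.

Lemma shift_between : 4 / 5 <= r <= 6 / 5.
Proof. unfold r; split; nra. Qed.

Lemma Rabs_inv_shift_sub1 : Rabs (1 / r - 1) <= 5 / 4 * (eps * n).
Proof.
  pose proof shift_between.
  replace (1 / r - 1) with ((1 - r) * / r) by (field; lra).
  rewrite Rabs_mult, Rabs_inv, (Rabs_pos_eq r) by lra.
  replace (5 / 4 * (eps * n)) with (eps * n * / (4 / 5)) by field.
  apply Rmult_le_compat; [apply Rabs_pos | left; apply Rinv_0_lt_compat; lra | |].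
  - apply Rabs_le; unfold r; split; nra.
  - apply Rinv_le_contravar; lra.
Qed.

Lemma Rabs_shift_sq_sub : Rabs (a ^ 2 - k1 ^ 2) <= eps * n ^ 3.
Proof.
  replace (a ^ 2 - k1 ^ 2) with ((a - k1) * (a + k1)) by ring.
  rewrite Rabs_mult, (Rabs_pos_eq (a - k1)) by lra.
  assert (- n <= k1 <= n) by (split; nra).
  assert (Rabs (a + k1) <= 2 * n) by (apply Rabs_le; lra).
  replace (eps * n ^ 3) with (eps * n ^ 2 / 2 * (2 * n)) by field.
  apply Rmult_le_compat; [lra | apply Rabs_pos | lra | assumption].
Qed.

Lemma shifted_denominator_lower :
  2 / 5 * (1 + n ^ 2) <= 2 + a ^ 2 + 2 * k3 ^ 2 / r.
Proof.
  pose proof shift_between.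
  assert (Hk3 : k3 ^ 2 <= 2 * k3 ^ 2 / r).
  { replace (2 * k3 ^ 2 / r) with (k3 ^ 2 * (2 * / r)) by (field; lra).
    assert (/ 2 <= / r) by (apply Rinv_le_contravar; lra).
    pose proof (pow2_ge_0 k3); nra. }
  assert (a - k1 <= n / 10) by nra.
  assert ((a - k1) ^ 2 <= (n / 10) ^ 2) by (apply pow_incr; lra).
  pose proof (pow2_ge_0 (2 * a - k1)).
  nra.
Qed.

Lemma shifted_denominator_close :
  Rabs ((2 + a ^ 2 + 2 * k3 ^ 2 / r) - (2 + k1 ^ 2 + 2 * k3 ^ 2))
  <= 7 / 2 * (eps * n ^ 3).
Proof.
  replace ((2 + a ^ 2 + 2 * k3 ^ 2 / r) - (2 + k1 ^ 2 + 2 * k3 ^ 2))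
    with ((a ^ 2 - k1 ^ 2) + 2 * k3 ^ 2 * (1 / r - 1))
    by (pose proof shift_between; field; lra).
  eapply Rle_trans; [apply Rabs_triang |].
  rewrite Rabs_mult, (Rabs_pos_eq (2 * k3 ^ 2)) by nra.
  pose proof Rabs_shift_sq_sub; pose proof Rabs_inv_shift_sub1.
  assert (2 * k3 ^ 2 <= 2 * n ^ 2) by nra.
  assert (2 * k3 ^ 2 * Rabs (1 / r - 1) <= 2 * n ^ 2 * (5 / 4 * (eps * n)))
    by (apply Rmult_le_compat; [nra | apply Rabs_pos | lra | lra]).
  lra.
Qed.

Lemma shifted_quotient_close :
  Rabs (1 / (2 + a ^ 2 + 2 * k3 ^ 2 / r) - 1 / (2 + k1 ^ 2 + 2 * k3 ^ 2))
  <= 35 / 4 * (eps * n ^ 3 / (1 + n ^ 2) ^ 2).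
Proof.
  eapply Rle_trans.
  { apply (Rabs_inv_sub_le _ _ (2 / 5 * (1 + n ^ 2)) (1 + n ^ 2));
      [nra | apply shifted_denominator_lower | nra | nra]. }
  replace (35 / 4 * (eps * n ^ 3 / (1 + n ^ 2) ^ 2))
    with (7 / 2 * (eps * n ^ 3) / (2 / 5 * (1 + n ^ 2) * (1 + n ^ 2))) by (field; nra).
  unfold Rdiv; apply Rmult_le_compat_r; [left; apply Rinv_0_lt_compat; nra |].
  apply shifted_denominator_close.
Qed.

End Comparison.

Theorem proposition5p2 (delta : R) (Hdelta : 0 < delta < 1/5) :
  exists C : R, 0 <= C /\
    forall (eps k1 k3 : R), 0 < eps -> norm2 k1 k3 < delta / eps ->
      Rabs (eps ^ 2 / (2 * eps ^ 2 + g (1 + eps * k1) (eps * k3))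
            - 1 / (2 + k1 ^ 2 + 2 * k3 ^ 2))
      <= C * (eps * (norm2 k1 k3) ^ 3 / (1 + (norm2 k1 k3) ^ 2) ^ 2).
Proof.
  exists (35 / 4); split; [lra |].
  intros eps k1 k3 Heps Hk.
  assert (Hsmall : eps * norm2 k1 k3 <= 1 / 5).
  { apply Rmult_lt_compat_l with (r := eps) in Hk; [| lra].
    replace (eps * (delta / eps)) with delta in Hk by (field; lra). lra. }
  destruct (norm2_shift_scaled eps k1 k3 Heps) as [Ha Hak1].
  set (r := norm2 (1 + eps * k1) (eps * k3)) in *.
  set (a := (r - 1) / eps) in *.
  assert (Hr : r = 1 + eps * a) by (unfold a; field; lra).
  assert (Hr0 : 0 < r) by nra.
  rewrite g_polar, shifted_ratio by assumption.
  fold r a; rewrite Hr.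
  apply shifted_quotient_close; auto using norm2_sq; lra.
Qed.
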